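(* Let $n\ge 4$ be an integer and let $QD_{2^n}=\langle a,b : a^{2^{n-1}}=b^2=1,\ bab^{-1}=a^{2^{n-2}-1}\rangle$ be the quasidihedral group of order $2^n$. Let $\Gamma_{QD_{2^n}}$ be its non-commuting graph. Then the spectrum of the distance Laplacian matrix $D^L(\Gamma_{QD_{2^n}})$ (eigenvalues counted with multiplicity, multiplicities being added if two of the listed values coincide) consists of: (a) $0$ with multiplicity $1$; (b) $2^n-2$ and $2^n$, each with multiplicity $2^{n-2}$; (c) $2^n+2^{n-1}-4$ with multiplicity $2^{n-1}-3$.
   Context: For a finite non-abelian group $G$ with centre $Z(G)$, the non-commuting graph $\Gamma_G$ is the simple undirected graph with vertex set $G\setminus Z(G)$, in which two distinct vertices $u,v$ are adjacent if and only if $uv\ne vu$. For a connected graph $H$, $d_{uv}$ denotes the length of a shortest path between $u$ and $v$; the distance matrix $D(H)$ has $(u,v)$-entry $d_{uv}$. The transmission of a vertex $v$ is $\sum_{u} d_{uv}$, and $Tr(H)$ is the diagonal matrix of vertex transmissions. The distance Laplacian matrix is $D^L(H)=Tr(H)-D(H)$. *)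

From mathcomp Require Import all_boot all_order all_algebra all_fingroup all_solvable all_field.
Set Implicit Arguments. Unset Strict Implicit. Unset Printing Implicit Defensive.
Import GRing.Theory Num.Theory.

Section NonCommutingGraph.
Variables (gT : finGroupType) (G : {group gT}).

Definition ncg_vertices : {set gT} := (G :\: 'Z(G))%g.

(* Adjacency: two vertices are adjacent iff they do not commute
   (non-commuting elements are automatically distinct). *)
Definition ncg_adj (x y : gT) : bool :=
  [&& x \in ncg_vertices, y \in ncg_vertices & (x * y)%g != (y * x)%g].

Fixpoint ncg_ball (k : nat) (u : gT) : {set gT} :=
  match k with
  | 0 => [set u]
  | k'.+1 => ncg_ball k' u :|:
             [set y in ncg_vertices | [exists x in ncg_ball k' u, ncg_adj x y]]
  end.

(* Shortest path distance d_{uv}: least k with v within distance k of u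
   (the graph under consideration is connected, so such k < #|V| exists). *)
Definition ncg_dist (u v : gT) : nat :=
  find (fun k => v \in ncg_ball k u) (iota 0 #|ncg_vertices|).

Local Notation N := #|ncg_vertices|.
Local Notation vx := (@enum_val gT (mem ncg_vertices)).

Definition ncg_dist_mx : 'M[algC]_N :=
  \matrix_(i < N, j < N) (ncg_dist (vx i) (vx j))%:R%R.

Definition ncg_trans_mx : 'M[algC]_N :=
  diag_mx (\row_(i < N) (\sum_(j < N) ncg_dist_mx i j)%R).

Definition ncg_distLap : 'M[algC]_N := (ncg_trans_mx - ncg_dist_mx)%R.

End NonCommutingGraph.

(* Any two commuting non-central elements u, w of a group have a common
   non-commuting neighbour, since a group is never the union of the two proper
   subgroups C_G(u) and C_G(w); so the non-commuting graph has diameter 2 and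
   D^L(u, w) = [u = w] (N + |C_V(u)|) - 1 - [uw = wu], where N = |V|.
   In SD_(2^n), and in every group G with an abelian subgroup X of index 2 and
   a centre {1, z} of order 2, commuting is an equivalence relation on V with
   classes X \ Z and the pairs {t, tz}, t outside X.  This forces explicit
   linear relations among the rows of D^L - l I: all rows sum to 0 (l = 0), the
   rows of t and tz coincide (l = N + 2), their sum is proportional to the sum
   of the rows indexed by X \ Z (l = N), and the rows indexed by X \ Z coincide
   (l = N + |X \ Z|).  The resulting lower bounds on the geometric
   multiplicities already add up to N, so they determine the characteristic
   polynomial. *)

From mathcomp Require Import all_boot all_order all_algebra all_fingroup all_solvable all_field.
From mathcomp Require Import zify ring.
Set Implicit Arguments. Unset Strict Implicit. Unset Printing Implicit Defensive.
Import GRing.Theory Num.Theory.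
Local Open Scope ring_scope.

Lemma sumr_delta (T : finType) (R : pzSemiRingType) (A : {pred T}) u (F : T -> R) :
  \sum_(k in A) (k == u)%:R * F k = (u \in A)%:R * F u.
Proof.
rewrite big_mkcond (bigD1 u) //= big1 => [|k /negbTE->]; last by case: ifP; rewrite ?mul0r.
by rewrite eqxx mul1r addr0; case: (u \in A); rewrite ?mul1r ?mul0r.
Qed.

Section EigenMultiplicities.
Variable F : fieldType.

Lemma char_poly_similar n (P A B : 'M[F]_n) :
  P \in unitmx -> P *m A = B *m P -> char_poly A = char_poly B.
Proof.
move=> Pu PAB; set P' := map_mx polyC P.
have PAB' : P' *m char_poly_mx A = char_poly_mx B *m P'.
  by rewrite /char_poly_mx mulmxBr mulmxBl -!map_mxM PAB scalar_mxC.
have P'_nz : \det P' != 0 by rewrite det_map_mx polyC_eq0 -unitfE -unitmxE.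
by apply: (mulfI P'_nz); rewrite -det_mulmx PAB' det_mulmx mulrC.
Qed.

Lemma char_poly_dvd_eigenspace_rank n k l (A : 'M[F]_n) a :
  n = (k + l)%N -> \rank (eigenspace A a) = k -> ('X - a%:P) ^+ k %| char_poly A.
Proof.
move=> defn rkE; subst n; set E := eigenspace A a.
have rkEC : \rank (E^C)%MS = l by rewrite mxrank_compl rkE addKn.
pose B := castmx (rkE, erefl) (row_base E).
pose C := castmx (rkEC, erefl) (row_base (E^C)%MS).
have defB : (B :=: E)%MS := eqmx_trans (eqmx_cast _ _) (eq_row_base E).
have defC : (C :=: E^C)%MS := eqmx_trans (eqmx_cast _ _) (eq_row_base _).
pose P := col_mx B C.
have P_full : row_full P.
  by rewrite -sub1mx -addsmxE (adds_eqmx defB defC) sub1mx addsmx_compl_full.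
have BA : B *m A = a *: B by apply/eigenspaceP; rewrite defB.
pose Y := (C *m A) *m pinvmx P.
have YP : Y *m P = C *m A by rewrite mulmxKpV // submx_full.
pose T := block_mx (a%:M : 'M_k) 0 (lsubmx Y) (rsubmx Y).
have PAT : P *m A = T *m P.
  rewrite mul_col_mx mul_block_col mul0mx addr0 mul_scalar_mx BA.
  by rewrite -mul_row_col hsubmxK YP.
rewrite (char_poly_similar _ PAT) -?row_full_unit // /char_poly.
have -> : char_poly_mx T = block_mx (('X - a%:P)%:M : 'M_k) 0
     (- map_mx polyC (lsubmx Y)) (char_poly_mx (rsubmx Y)).
  rewrite /char_poly_mx map_block_mx /= map_mx0 scalar_mx_block.
  rewrite opp_block_mx add_block_mx oppr0 addr0 sub0r map_scalar_mx.
  by rewrite raddfB.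
by rewrite det_lblock det_scalar dvdp_mulIl.
Qed.

Lemma char_poly_dvd_eigenspace n (A : 'M[F]_n) a :
  ('X - a%:P) ^+ \rank (eigenspace A a) %| char_poly A.
Proof.
apply: (char_poly_dvd_eigenspace_rank (l := n - \rank (eigenspace A a))) => //.
by rewrite subnKC // rank_leq_col.
Qed.

Lemma char_poly_eigen_count n (A : 'M[F]_n) (s : seq F) :
  size s = n -> {in s, forall a, (\rank (A - a%:M)%R <= n - count_mem a s)%N} ->
  char_poly A = \prod_(a <- s) ('X - a%:P).
Proof.
move=> size_s rkA.
have dvd_count a : a \in s -> ('X - a%:P) ^+ count_mem a s %| char_poly A.
  move=> s_a; apply: dvdp_trans (char_poly_dvd_eigenspace A a); apply: dvdp_exp2l.
  rewrite /eigenspace mxrank_ker leq_subRL ?rank_leq_row // addnC -leq_subRL.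
    exact: rkA.
  by rewrite -size_s count_size.
have dvd_prod : \prod_(a <- undup s) ('X - a%:P) ^+ count_mem a s %| char_poly A.
  have : {subset undup s <= s} by move=> c; rewrite mem_undup.
  elim: (undup s) (undup_uniq s) => [|b t IHt] /=.
    by rewrite big_nil dvd1p.
  case/andP=> t'b uniq_t sub_s; rewrite big_cons Gauss_dvdp.
    rewrite dvd_count ?IHt ?sub_s ?mem_head // => c t_c.
    by rewrite sub_s // inE t_c orbT.
  apply: coprimep_expl; rewrite coprimep_sym coprimep_XsubC rootE horner_prod.
  rewrite prodf_seq_neq0; apply/allP => c t_c /=.
  rewrite horner_exp hornerXsubC expf_neq0 // subr_eq0.
  by apply: contraNneq t'b => ->.
rewrite prodr_undup_exp_count in dvd_prod.
apply/eqP; rewrite eq_sym -eqp_monic ?monic_prod_XsubC ?char_poly_monic //.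
by rewrite -dvdp_size_eqp // size_prod_XsubC size_char_poly size_s.
Qed.

Lemma mxrank_outer_sum_leq (K : finType) (P : {pred K}) m n (A : 'M[F]_(m, n))
    (f : K -> 'I_m -> F) (g : K -> 'I_n -> F) :
  (forall i j, A i j = \sum_(k in P) f k i * g k j) -> (\rank A <= #|P|)%N.
Proof.
move=> defA.
have -> : A = \sum_(k in P) (\col_i f k i) *m (\row_j g k j).
  apply/matrixP => i j; rewrite defA summxE; apply: eq_bigr => k _.
  by rewrite !mxE big_ord1 !mxE.
rewrite -sum1_card; elim/big_ind2: _ => [|B1 c1 B2 c2 B1c1 B2c2|k _].
- by rewrite mxrank0.
- exact: leq_trans (mxrank_add _ _) (leq_add B1c1 B2c2).
- exact: leq_trans (mxrankM_maxr _ _) (rank_leq_row _).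
Qed.

End EigenMultiplicities.

Lemma find_iota0 (p : pred nat) n k :
  (k < n)%N -> p k -> (forall j, j < k -> ~~ p j)%N -> find p (iota 0 n) = k.
Proof.
move=> lt_kn pk before_k; rewrite -(subnKC (ltnW lt_kn)) iotaD find_cat size_iota.
have -> : has p (iota 0 k) = false.
  by apply/negbTE/hasPn => j; rewrite mem_iota => /andP[_ /before_k].
have [d ->] : exists d, (n - k = d.+1)%N by exists (n - k).-1; rewrite prednK ?subn_gt0.
by rewrite /= pk addn0.
Qed.

Lemma sum_mem_card (T : finType) (A B : {set T}) :
  (\sum_(x in A) (x \in B) = #|A :&: B|)%N.
Proof.
rewrite -sum1_card big_mkcond [RHS]big_mkcond; apply: eq_bigr => x _.
by rewrite in_setI; case: (x \in A); case: (x \in B).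
Qed.

Lemma involution_transversal (T : finType) (s : T -> T) (A : {set T}) :
    involutive s -> (forall x, s x != x) -> {in A, forall x, s x \in A} ->
  exists R : {set T}, [/\ R \subset A, #|A| = (2 * #|R|)%N
                         & {in A, forall x, (s x \in R) = (x \notin R)}].
Proof.
move=> sK s_neq sA; pose R := [set x in A | (enum_rank x < enum_rank (s x))%N].
have sR : {in A, forall x, (s x \in R) = (x \notin R)}.
  move=> x Ax; have neq_rank : (enum_rank x == enum_rank (s x) :> nat) = false.
    by rewrite val_eqE (inj_eq enum_rank_inj) eq_sym (negbTE (s_neq x)).
  by rewrite !inE sA // Ax sK /= ltnNge leq_eqVlt neq_rank.
have sRA : R \subset A by apply/subsetP => x; rewrite inE => /andP[].
exists R; split=> //; rewrite -(cardsID R A) (setIidPr sRA).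
have -> : A :\: R = s @: R.
  apply/setP => x; rewrite in_setD; apply/andP/imsetP => [[R'x Ax]|[y Ry ->]].
    by exists (s x); rewrite ?sK // sR.
  have Ay := subsetP sRA y Ry; by rewrite sR // Ry sA.
by rewrite card_imset ?addnn -?mul2n //; exact: inv_inj.
Qed.

Section ProperSubgroups.
Variables (gT : finGroupType) (G H K : {group gT}).
Local Open Scope group_scope.

Lemma proper_subgroups_not_cover :
  H \proper G -> K \proper G -> exists2 g, g \in G & (g \notin H) && (g \notin K).
Proof.
case/properP=> sHG [h Gh H'h] /properP[sKG [k Gk K'k]].
have [sHK | /subsetPn[h1 Hh1 K'h1]] := boolP (H \subset K).
  by exists k => //; rewrite K'k andbT; apply: contra K'k; apply: (subsetP sHK).
have [sKH | /subsetPn[k1 Kk1 H'k1]] := boolP (K \subset H).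
  by exists h => //; rewrite H'h; apply: contra H'h; apply: (subsetP sKH).
exists (h1 * k1); first exact: groupM (subsetP sHG _ Hh1) (subsetP sKG _ Kk1).
by rewrite groupMl // groupMr // H'k1.
Qed.

End ProperSubgroups.

Section NonCommutingGraphDistanceLaplacian.
Variables (gT : finGroupType) (G : {group gT}).
Local Open Scope group_scope.
Local Notation V := (ncg_vertices G).

Lemma in_ncg_vertices u : (u \in V) = (u \in G) && (u \notin 'Z(G)).
Proof. by rewrite /ncg_vertices in_setD andbC. Qed.

Lemma ncg_adjE u w : u \in V -> w \in V -> ncg_adj G u w = (w \notin 'C[u]).
Proof. by move=> Vu Vw; rewrite /ncg_adj Vu Vw cent1E eq_sym. Qed.

Lemma ncg_ball1 u w :
  (w \in ncg_ball G 1 u) = (w == u) || (w \in V) && ncg_adj G u w.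
Proof.
rewrite /= in_setU in_set1 in_set; congr (_ || (_ && _)).
apply/existsP/idP => [[x /andP[]]|adj_uw]; first by rewrite in_set1 => /eqP ->.
by exists u; rewrite in_set1 eqxx.
Qed.

Lemma ncg_common_neighbour u w : u \in V -> w \in V ->
  exists2 g, g \in V & ncg_adj G u g && ncg_adj G g w.
Proof.
have proper_cent v : v \in V -> 'C_G[v] \proper G.
  rewrite in_ncg_vertices properE subsetIl => /andP[Gv Z'v].
  apply: contra Z'v => sGC; apply/centerP; split=> // g Gg.
  by have /subcent1P[_ /commute_sym] := subsetP sGC g Gg.
move=> Vu Vw; have [g Gg] := proper_subgroups_not_cover (proper_cent u Vu) (proper_cent w Vw).
rewrite !in_setI Gg /= => /andP[C'u_g C'w_g].
have Vg : g \in V.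
  rewrite in_ncg_vertices Gg; apply: contra C'u_g => Zg.
  apply/cent1P; case/centerP: Zg => _; apply.
  by move: Vu; rewrite in_ncg_vertices => /andP[].
by exists g; rewrite // !ncg_adjE // C'u_g cent1C.
Qed.

Lemma ncg_distE u w : u \in V -> w \in V ->
  ncg_dist G u w = (if u == w then 0 else if w \in 'C[u] then 2 else 1)%N.
Proof.
move=> Vu Vw; rewrite /ncg_dist.
have [<-|neq_uw] := eqVneq u w.
  by apply: find_iota0; rewrite ?card_gt0 /= ?set11 //; apply/set0Pn; exists u.
have [g Vg /andP[adj_ug adj_gw]] := ncg_common_neighbour Vu Vw.
have neq_wu : (w == u) = false by rewrite eq_sym (negbTE neq_uw).
have not_ball0 : w \notin ncg_ball G 0 u by rewrite /= in_set1 neq_wu.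
have [Cu_w | C'u_w] := ifPn; apply: find_iota0.
- apply/card_gt2P; exists u, w, g; split; first by split.
  move: adj_ug adj_gw; rewrite !ncg_adjE // neq_uw.
  move=> C'u_g C'g_w; split=> //.
    by apply: contraNneq C'g_w => ->; rewrite cent1id.
  by apply: contraNneq C'u_g => ->; rewrite cent1id.
- rewrite [ncg_ball _ _ _]/= in_setU in_set Vw; apply/orP; right.
  by apply/existsP; exists g; rewrite -/(ncg_ball G 1 u) ncg_ball1 Vg adj_ug orbT.
- by case=> [|[|j]] // _; rewrite ncg_ball1 neq_wu ncg_adjE // Cu_w andbF.
- by apply/card_gt1P; exists u, w.
- by rewrite ncg_ball1 Vw ncg_adjE // C'u_w orbT.
- by case.
Qed.


Lemma ncg_transmission u : u \in V ->
  (\sum_(w in V) ncg_dist G u w = #|V| + #|'C_V[u]| - 2)%N.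
Proof.
move=> Vu.
have dist_add w : w \in V -> (ncg_dist G u w + 2 * (u == w) = 1 + (w \in 'C[u]))%N.
  by move=> Vw; rewrite ncg_distE //; case: eqP => [<-|]; rewrite ?cent1id //; case: ifP.
have sum_diag : (\sum_(w in V) 2 * (u == w) = 2)%N.
  rewrite (bigD1 u) //= eqxx big1 // => w /andP[_]; rewrite eq_sym => /negbTE->.
  by rewrite muln0.
suff: (\sum_(w in V) ncg_dist G u w + 2 = #|V| + #|'C_V[u]|)%N by lia.
rewrite -sum_diag -sum_mem_card -sum1_card -!big_split; exact: eq_bigr.
Qed.

Local Open Scope ring_scope.
Local Notation vx := (@enum_val gT (mem V)).

Definition ncg_dlap (l : algC) (u w : gT) : algC :=
  (u == w)%:R * ((#|V| + #|'C_V[u]|)%:R - l) - 1 - (w \in 'C[u])%:R.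

Lemma ncg_distLap_subE l i j :
  (ncg_distLap G - l%:M) i j = ncg_dlap l (vx i) (vx j).
Proof.
have Vx k : vx k \in V := enum_valP k.
rewrite /ncg_distLap /ncg_trans_mx /ncg_dlap !mxE; under eq_bigr do rewrite mxE.
rewrite -natr_sum -(big_enum_val (ncg_dist G (vx i))) ncg_transmission //.
rewrite ncg_distE // (inj_eq enum_val_inj); have [<-|_] := eqVneq i j.
  have C_ii : (0 < #|'C_V[vx i]|)%N by apply/card_gt0P; exists (vx i); rewrite inE Vx cent1id.
  rewrite cent1id natrB ?(@leq_add 1 1) // ?(leq_trans C_ii) ?subset_leq_card ?subsetIl //.
  by rewrite /= !mulr1n mul1r; ring.
by rewrite /= !mulr0n mul0r; case: (_ \in _) => /=; ring.
Qed.

Lemma ncg_dlapC l u w : ncg_dlap l u w = ncg_dlap l w u.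
Proof. by rewrite /ncg_dlap cent1C eq_sym; case: eqVneq => [->|_]; rewrite ?mul0r. Qed.

Lemma ncg_rank_leq l (S : {set gT}) (c : gT -> gT -> algC) :
    {in V :\: S & V, forall u w, ncg_dlap l u w = \sum_(k in S) c u k * ncg_dlap l k w} ->
  (\rank (ncg_distLap G - l%:M)%R <= #|S|)%N.
Proof.
move=> comb; pose f k i := if vx i \in S then (k == vx i)%:R else c (vx i) k.
apply: (mxrank_outer_sum_leq (f := f) (g := fun k j => ncg_dlap l k (vx j))) => i j.
rewrite ncg_distLap_subE /f; have [S_i|S'_i] /= := boolP (vx i \in S).
  by rewrite sumr_delta S_i mul1r.
have Vx k : vx k \in V := enum_valP k.
by apply: comb; [rewrite in_setD S'_i Vx | exact: Vx].
Qed.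

Lemma ncg_dlap0_sum w : w \in V -> \sum_(u in V) ncg_dlap 0 u w = 0.
Proof.
move=> Vw; under eq_bigr do rewrite ncg_dlapC /ncg_dlap subr0 eq_sym.
rewrite !sumrB sumr_delta Vw mul1r sumr_const -natr_sum sum_mem_card setIC.
by rewrite natrD; ring.
Qed.

Lemma ncg_distLap_rank0 : (\rank (ncg_distLap G - 0%:M)%R <= #|V| - 1)%N.
Proof.
have [V0|[y Vy]] := set_0Vmem V.
  by apply: leq_trans (rank_leq_row _) _; rewrite V0 cards0.
have -> : (#|V| - 1 = #|V :\ y|)%N by rewrite (cardsD1 y V) Vy addKn.
apply: (@ncg_rank_leq 0 _ (fun _ _ => -1)) => u w; rewrite setDDr setDv set0U.
case/setIP => _ /set1P-> Vw; apply/eqP.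
by rewrite -mulr_sumr mulN1r -addr_eq0 -[X in _ == X](ncg_dlap0_sum Vw) (big_setD1 y Vy).
Qed.

End NonCommutingGraphDistanceLaplacian.

Section AbelianSubgroupOfIndexTwo.
Variables (gT : finGroupType) (G X : {group gT}) (z : gT) (r : nat).
Local Open Scope group_scope.
Hypotheses (sXG : X \subset G) (iXG : #|G : X| = 2%N) (cXX : abelian X).
Hypotheses (defZ : 'Z(G) = [set 1; z]) (ntz : z != 1) (Xz : z \in X).
Hypotheses (oX : #|X| = (2 * r)%N) (r_gt2 : (2 < r)%N).
Local Notation V := (ncg_vertices G).

Lemma Zz : z \in 'Z(G). Proof. by rewrite defZ !inE eqxx orbT. Qed.

Lemma mulgzz : z * z = 1.
Proof.
have : z * z \in 'Z(G) by rewrite groupM ?Zz.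
rewrite defZ !inE => /orP[/eqP //|/eqP zz_z].
by case/eqP: ntz; apply: (mulIg z); rewrite zz_z mul1g.
Qed.

Lemma mulgzK t : t * z * z = t. Proof. by rewrite -mulgA mulgzz mulg1. Qed.

Lemma mulgz_neq t : t * z != t.
Proof. by apply: contraNneq ntz => /(canRL (mulKg t))->; rewrite mulVg. Qed.

Lemma outsideMz t : t \in G :\: X -> t * z \in G :\: X.
Proof.
case/setDP=> Gt X't; rewrite in_setD (groupM Gt (subsetP sXG z Xz)) andbT.
by rewrite groupMr.
Qed.

Lemma sZX : 'Z(G) \subset X.
Proof. by apply/subsetP => v; rewrite defZ !inE => /orP[]/eqP->. Qed.

Lemma ncg_vertices_index2 : V = (X :\: 'Z(G)) :|: (G :\: X).
Proof.
apply/setP => u; rewrite in_ncg_vertices in_setU !in_setD andbC.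
have [Xu|X'u] := boolP (u \in X); first by rewrite (subsetP sXG) // andbT orbF.
by rewrite andbF (contraNN (subsetP sZX u)).
Qed.

Lemma center_of_commute_outside u t :
  u \in X -> t \in G :\: X -> commute u t -> u \in 'Z(G).
Proof.
move=> Xu X't cut; apply/centerP; split=> [|g Gg]; first exact: subsetP sXG u Xu.
have [Xg|X'g] := boolP (g \in X); first exact: (centsP cXX).
have : g \in X :* t by rewrite (rcoset_index2 sXG iXG X't) in_setD X'g.
by case/rcosetP=> v Xv ->; apply: commuteM => //; apply: (centsP cXX).
Qed.

Lemma cent1_noncentral u w : u \in X :\: 'Z(G) -> w \in G -> (w \in 'C[u]) = (w \in X).
Proof.
case/setDP=> Xu Z'u Gw; apply/idP/idP => [/cent1P cwu | Xw].
  apply: contraR Z'u => X'w.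
  by apply: (center_of_commute_outside Xu _ (commute_sym cwu)); rewrite in_setD X'w.
by apply/cent1P; apply: (centsP cXX).
Qed.

Lemma cent1_outside t w : t \in G :\: X -> w \in V -> (w \in 'C[t]) = (w \in [set t; t * z]).
Proof.
move=> X't; rewrite in_ncg_vertices => /andP[Gw Z'w].
have cz : commute z t by case/centerP: Zz => _; apply; case/setDP: X't.
apply/idP/idP => [/cent1P cwt | ]; last first.
  by case/set2P=> ->; apply/cent1P => //; apply/commute_sym/commuteM => //; apply: commute_sym.
have [Xw|X'w] := boolP (w \in X).
  by case/negP: Z'w; apply: (center_of_commute_outside Xw X't).
have : w \in X :* t by rewrite (rcoset_index2 sXG iXG X't) in_setD X'w.
case/rcosetP=> v Xv defw; have cvt : commute v t.
  by apply: (mulIg t); rewrite -defw cwt defw mulgA.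
have := center_of_commute_outside Xv X't cvt; rewrite defZ defw !inE.
by case/orP=> /eqP->; rewrite ?mul1g ?eqxx // cz eqxx orbT.
Qed.

Lemma card_center : #|'Z(G)| = 2%N.
Proof. by rewrite defZ cards2 eq_sym ntz. Qed.

Lemma card_noncentral_X : #|X :\: 'Z(G)| = (2 * r - 2)%N.
Proof. by rewrite cardsD (setIidPr sZX) oX card_center. Qed.

Lemma card_outside_X : #|G :\: X| = (2 * r)%N.
Proof.
rewrite cardsD (setIidPr sXG) -(Lagrange sXG) iXG oX; lia.
Qed.

Lemma card_ncg_vertices : #|V| = (4 * r - 2)%N.
Proof.
rewrite /ncg_vertices cardsD (setIidPr (center_sub G)) card_center -(Lagrange sXG) iXG oX.
lia.
Qed.

Lemma ncg_centV_noncentral u : u \in X :\: 'Z(G) -> 'C_V[u] = X :\: 'Z(G).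
Proof.
move=> XZu; apply/setP => w; rewrite in_setI in_ncg_vertices in_setD.
have [Gw|G'w] /= := boolP (w \in G); first by rewrite cent1_noncentral.
by rewrite (contraNF (subsetP sXG w)) ?andbF.
Qed.

Lemma ncg_centV_outside t : t \in G :\: X -> 'C_V[t] = [set t; t * z].
Proof.
move=> X't; apply/setP => w; rewrite in_setI andbC.
have [Vw|V'w] := boolP (w \in V); first by rewrite cent1_outside ?andbT.
rewrite andbF; apply/esym/negbTE; apply: contra V'w.
by case/set2P=> ->; rewrite ncg_vertices_index2 in_setU ?outsideMz ?X't ?orbT.
Qed.

Local Open Scope ring_scope.

Lemma ncg_dlap_noncentral l u w : u \in X :\: 'Z(G) -> w \in V ->
  ncg_dlap G l u w = (u == w)%:R * ((6 * r - 4)%N%:R - l) - 1 - (w \in X)%:R.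
Proof.
move=> XZu; rewrite in_ncg_vertices => /andP[Gw _].
rewrite /ncg_dlap ncg_centV_noncentral // card_ncg_vertices card_noncentral_X.
by rewrite cent1_noncentral // (_ : 4 * r - 2 + (2 * r - 2) = 6 * r - 4)%N //; lia.
Qed.

Lemma ncg_dlap_outside l t w : t \in G :\: X -> w \in V ->
  ncg_dlap G l t w = (t == w)%:R * ((4 * r)%N%:R - l) - 1 - (w \in [set t; (t * z)%g])%:R.
Proof.
move=> X't Vw; rewrite /ncg_dlap ncg_centV_outside // card_ncg_vertices cards2.
by rewrite (eq_sym t (t * z)%g) mulgz_neq cent1_outside // (_ : 4 * r - 2 + 2 = 4 * r)%N //; lia.
Qed.

Lemma rank_noncentral_eigen :
  (\rank (ncg_distLap G - (6 * r - 4)%N%:R%:M)%R <= #|V| - (2 * r - 3))%N.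
Proof.
have [x0 XZx0] : exists x0, x0 \in X :\: 'Z(G).
  by apply/card_gt0P; rewrite card_noncentral_X; lia.
have X'x0 : x0 \notin G :\: X by rewrite in_setD negb_and negbK; case/setDP: XZx0 => ->.
have -> : (#|V| - (2 * r - 3) = #|x0 |: (G :\: X)|)%N.
  by rewrite cardsU1 X'x0 card_outside_X card_ncg_vertices; lia.
apply: (ncg_rank_leq (c := fun _ k => (k == x0)%:R)) => u w.
case/setDP=> Vu; rewrite in_setU1 negb_or => /andP[_ X'u] Vw.
have XZu : u \in X :\: 'Z(G) by move: Vu; rewrite ncg_vertices_index2 in_setU (negbTE X'u) orbF.
by rewrite sumr_delta setU11 mul1r !ncg_dlap_noncentral // subrr !mulr0.
Qed.

Lemma pair_transversal : exists R : {set gT},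
  [/\ R \subset G :\: X, #|(X :\: 'Z(G)) :|: R| = (3 * r - 2)%N
    & {in G :\: X, forall t, ((t * z)%g \in R) = (t \notin R)}].
Proof.
have [R [sR cardR sRz]] := involution_transversal mulgzK mulgz_neq outsideMz.
exists R; split=> //; rewrite cardsU card_noncentral_X.
have -> : (X :\: 'Z(G)) :&: R = set0.
  apply/disjoint_setI0; rewrite disjoint_sym disjoint_subset.
  by apply/subsetP => x /(subsetP sR)/setDP[_ X'x]; rewrite inE /= in_setD (negbTE X'x) andbF.
have oR : #|R| = r by apply/eqP; rewrite -(eqn_pmul2l (isT : 0 < 2)%N) -cardR card_outside_X.
by rewrite cards0 oR; lia.
Qed.

Lemma ncg_verticesD_outside (R : {set gT}) u :
  u \in V :\: ((X :\: 'Z(G)) :|: R) -> u \in G :\: X.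
Proof. by case/setDP; rewrite ncg_vertices_index2 !in_setU negb_or => /orP[]->. Qed.

Lemma rank_pair_eigen :
  (\rank (ncg_distLap G - (4 * r)%N%:R%:M)%R <= #|V| - r)%N.
Proof.
have [R [sR cardS sRz]] := pair_transversal.
have -> : (#|V| - r = #|(X :\: 'Z(G)) :|: R|)%N by rewrite cardS card_ncg_vertices; lia.
apply: (ncg_rank_leq (c := fun u k => (k == (u * z)%g)%:R)) => u w VS'u Vw.
have X'u := ncg_verticesD_outside VS'u.
have R'u : u \notin R by case/setDP: VS'u; rewrite in_setU negb_or => _ /andP[].
rewrite sumr_delta in_setU sRz // R'u orbT mul1r.
rewrite !ncg_dlap_outside ?outsideMz // subrr !mulr0 mulgzK.
by rewrite !in_set2 orbC.
Qed.

Lemma ncg_dlap_noncentral_sum w : w \in V ->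
  \sum_(k in X :\: 'Z(G)) ncg_dlap G (4 * r - 2)%N%:R k w = - (2 * r - 2)%N%:R.
Proof.
move=> Vw; under eq_bigr => k XZk do rewrite ncg_dlap_noncentral //.
rewrite !sumrB sumr_delta !sumr_const card_noncentral_X -natrB; last by lia.
have -> : (w \in X :\: 'Z(G)) = (w \in X).
  by rewrite in_setD; move: Vw; rewrite in_ncg_vertices => /andP[_ ->].
by rewrite (_ : 6 * r - 4 - (4 * r - 2) = 2 * r - 2)%N; [case: (w \in X); ring | lia].
Qed.

Lemma ncg_dlap_pair_sum u w : u \in G :\: X -> w \in V ->
  ncg_dlap G (4 * r - 2)%N%:R u w + ncg_dlap G (4 * r - 2)%N%:R (u * z)%g w = -2.
Proof.
move=> X'u Vw; rewrite !ncg_dlap_outside ?outsideMz // mulgzK -natrB; last by lia.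
rewrite (_ : 4 * r - (4 * r - 2) = 2)%N; last by lia.
rewrite !in_set2 (eq_sym u) (eq_sym (u * z)%g); have [->|_] := eqVneq w u.
  by rewrite eq_sym (negbTE (mulgz_neq u)) /=; ring.
by case: (w == (u * z)%g) => /=; ring.
Qed.

Lemma rank_pair_eigen_shift :
  (\rank (ncg_distLap G - (4 * r - 2)%N%:R%:M)%R <= #|V| - r)%N.
Proof.
have [R [sR cardS sRz]] := pair_transversal.
have -> : (#|V| - r = #|(X :\: 'Z(G)) :|: R|)%N by rewrite cardS card_ncg_vertices; lia.
pose c u k : algC := (r - 1)%N%:R^-1 * (k \in X)%:R - (k == (u * z)%g)%:R.
apply: (ncg_rank_leq (c := c)) => u w VS'u Vw.
have X'u := ncg_verticesD_outside VS'u.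
have R'u : u \notin R by case/setDP: VS'u; rewrite in_setU negb_or => _ /andP[].
under eq_bigr do rewrite mulrBl -mulrA.
rewrite sumrB sumr_delta in_setU sRz // R'u orbT mul1r -mulr_sumr.
have -> : \sum_(k in (X :\: 'Z(G)) :|: R) (k \in X)%:R * ncg_dlap G (4 * r - 2)%N%:R k w
    = \sum_(k in X :\: 'Z(G)) ncg_dlap G (4 * r - 2)%N%:R k w.
  rewrite big_mkcond [RHS]big_mkcond; apply: eq_bigr => k _; rewrite in_setU in_setD.
  have [Xk|X'k] := boolP (k \in X); last by rewrite mul0r andbF /=; case: ifP.
  have R'k : (k \in R) = false by apply: contraTF Xk => /(subsetP sR)/setDP[].
  by rewrite R'k andbT orbF mul1r.
rewrite ncg_dlap_noncentral_sum //; apply: (addIr (ncg_dlap G (4 * r - 2)%N%:R (u * z)%g w)).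
rewrite ncg_dlap_pair_sum // subrK (_ : 2 * r - 2 = 2 * (r - 1))%N; last by lia.
by rewrite natrM mulrN mulrCA mulVf ?mulr1 // pnatr_eq0; lia.
Qed.

Theorem ncg_distLap_char_poly_index2 :
  char_poly (ncg_distLap G) =
  \prod_(a <- 0 :: nseq r (4 * r - 2)%N%:R ++ nseq r (4 * r)%N%:R
               ++ nseq (2 * r - 3) (6 * r - 4)%N%:R) ('X - a%:P).
Proof.
set s := _ :: _; have count_s k : count_mem (k%:R : algC) s =
    ((k == 0) + (k == 4 * r - 2) * r + (k == 4 * r) * r + (k == 6 * r - 4) * (2 * r - 3))%N.
  by rewrite /= !count_cat !count_nseq /= eq_sym pnatr_eq0 !eqr_nat !(eq_sym k) !addnA.
apply: char_poly_eigen_count => [|a].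
  by rewrite /= !size_cat !size_nseq card_ncg_vertices; lia.
rewrite inE !mem_cat !mem_nseq.
case/or4P=> [/eqP-> | /andP[_ /eqP->] | /andP[_ /eqP->] | /andP[_ /eqP->]].
- by move: (count_s 0%N); rewrite mulr0n => ->; apply: leq_trans (ncg_distLap_rank0 G) _; lia.
- by rewrite count_s; apply: leq_trans rank_pair_eigen_shift _; lia.
- by rewrite count_s; apply: leq_trans rank_pair_eigen _; lia.
- by rewrite count_s; apply: leq_trans rank_noncentral_eigen _; lia.
Qed.

End AbelianSubgroupOfIndexTwo.

Unset Implicit Arguments.
Theorem theorem4p2 (n : nat) (hn : (4 <= n)%N) :
  char_poly (ncg_distLap [set: gsort 'SD_(2 ^ n)]%G) =
  \prod_(x <- 0 :: nseq (2 ^ (n - 2)) (2 ^ n - 2)%N%:R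
               ++ nseq (2 ^ (n - 2)) (2 ^ n)%N%:R
               ++ nseq (2 ^ (n - 1) - 3) (2 ^ n + 2 ^ (n - 1) - 4)%N%:R)
    ('X - x%:P).
Proof.
set G := [set: _]%G; have n_gt3 : (3 < n)%N by [].
have [[x y] genG [oy _]] := generators_semidihedral n_gt3 (isog_refl G).
have [_ _ [defZ oZ _ _] _ _] := semidihedral_structure n_gt3 genG (isog_refl G) oy.
case: genG => oG Gx ox _; set r := (2 ^ (n - 2))%N.
have n_ge2 : (2 <= n)%N by rewrite ltnW // ltnW.
have two_n : (2 ^ n = 4 * r)%N by rewrite /r -[4%N]/(2 ^ 2)%N -expnD subnKC.
have two_n1 : (2 ^ n.-1 = 2 * r)%N by rewrite /r -expnS -subn1 -subSn ?subSS.
have oz : #[x ^+ (2 ^ n.-2)]%g = 2%N by rewrite orderE -defZ.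
rewrite [in RHS](_ : 2 ^ (n - 1) = 2 * r)%N ?subn1 // [in RHS]two_n.
rewrite (_ : 4 * r + 2 * r - 4 = 6 * r - 4)%N; last by lia.
apply: (ncg_distLap_char_poly_index2 (X := <[x]>%G) (z := (x ^+ (2 ^ n.-2))%g)).
- by rewrite cycle_subG.
- rewrite -divgS ?cycle_subG //= oG -orderE ox two_n two_n1.
  by rewrite (_ : 4 * r = 2 * (2 * r))%N ?mulnK ?muln_gt0 ?expn_gt0 //; lia.
- exact: cycle_abelian.
- by rewrite defZ cycle2g.
- by rewrite -order_gt1 oz.
- exact: mem_cycle.
- by rewrite -orderE ox.
- by apply: (@leq_trans (2 ^ 2)) => //; rewrite leq_exp2l //; lia.
Qed.
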